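(* Let $(V,E)$ be a finite graph and $p\in[0,1]$. Let $(\eta_t,\sigma_t)_{t\ge0}$ be a continuous-time Markov jump process on $\{0,1\}^E\times\{-1,1\}^V$ with the following rates: (i) if $\eta'=\eta$ and there is $x\in V$ with $\sigma'=\sigma^x$ and $\eta(e)=0$ for all $e\in E_x$, the rate from $(\eta,\sigma)$ to $(\eta',\sigma')$ is $1$; (ii) if $\sigma'=\sigma$ and there is $e\in E$ with $\eta'=\eta^e$, the rate is $p\mathbf 1_{\eta(e)=0}\delta_\sigma(e)+(1-p)\mathbf 1_{\eta(e)=1}$; (iii) all other off-diagonal rates are $0$. Suppose $(\eta_0,\sigma_0)$ is distributed according to $IP$. Then for every $x\in V$, every $\sigma\in\{-1,1\}^V$ and every $s\ge0$, $$\lim_{t\to0}\frac1t\,\mathbb P(\sigma_{t+s}=\sigma^x\mid\sigma_s=\sigma)=(1-p)^{|\{e\in E_x:\ \delta_\sigma(e)=1\}|}.$$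
   Context: Edge configurations $\eta\in\{0,1\}^E$, spin configurations $\sigma\in\{-1,1\}^V$. For $e=\langle x,y\rangle$, $\delta_\sigma(e)=\mathbf 1_{\sigma(x)=\sigma(y)}$. $IP(\eta,\sigma)=\frac1Z\prod_{e\in E}\big(p\mathbf 1_{\eta(e)=1}\delta_\sigma(e)+(1-p)\mathbf 1_{\eta(e)=0}\big)$ with $Z$ the normalizing constant. $E_x$ is the set of edges with endvertex $x$; $\sigma^x$ is $\sigma$ with the spin at $x$ flipped; $\eta^e$ is $\eta$ with the value at edge $e$ changed. *)

From HB Require Import structures.
From mathcomp Require Import all_boot all_order all_algebra.
From mathcomp Require Import all_classical all_reals all_analysis.
Set Implicit Arguments. Unset Strict Implicit. Unset Printing Implicit Defensive.
Import Order.TTheory GRing.Theory Num.Theory.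
Local Open Scope ring_scope.

Definition edge (V : finType) (adj : rel V) :=
  {e : {set V} | [exists x, exists y, adj x y && (e == [set x; y])]}.

(* spins are encoded as bool (true = +1, false = -1);
   edge configurations as bool (true = 1, false = 0). *)
Definition state (V : finType) (adj : rel V) : finType :=
  ({ffun edge adj -> bool} * {ffun V -> bool})%type.

Section Model.
Variables (R : realType) (V : finType) (adj : rel V) (p : R).

Definition Ex (x : V) : {set edge adj} := [set e : edge adj | x \in val e].

Definition delta (sg : {ffun V -> bool}) (e : edge adj) : bool :=
  [forall u in val e, forall v in val e, sg u == sg v].

Definition flip_spin (sg : {ffun V -> bool}) (x : V) : {ffun V -> bool} :=
  [ffun y => if y == x then ~~ sg y else sg y].

Definition flip_edge (et : {ffun edge adj -> bool}) (e : edge adj)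
  : {ffun edge adj -> bool} :=
  [ffun f => if f == e then ~~ et f else et f].

Definition rate (a b : state adj) : R :=
  if [exists x, [&& a.1 == b.1, b.2 == flip_spin a.2 x &
                  [forall e in Ex x, ~~ a.1 e]]] then 1
  else if [pick e | (a.2 == b.2) && (b.1 == flip_edge a.1 e)] is Some e then
    p * (~~ a.1 e)%:R * (delta a.2 e)%:R + (1 - p) * (a.1 e)%:R
  else 0.

Definition gen (a b : state adj) : R :=
  if a == b then - \sum_(c | c != a) rate a c else rate a b.

Fixpoint genpow (n : nat) (a b : state adj) : R :=
  if n is n'.+1 then \sum_c gen a c * genpow n' c b else (a == b)%:R.

Definition trans (t : R) (a b : state adj) : R :=
  limn (fun N : nat => \sum_(n < N) t ^+ n / (n`!)%:R * genpow n a b).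

Definition IPweight (a : state adj) : R :=
  \prod_(e : edge adj)
     (p * (a.1 e)%:R * (delta a.2 e)%:R + (1 - p) * (~~ a.1 e)%:R).
Definition IP (a : state adj) : R :=
  IPweight a / \sum_(c : state adj) IPweight c.

Definition law_at (s : R) (b : state adj) : R :=
  \sum_(a : state adj) IP a * trans s a b.

Definition prob_spin (s : R) (sg : {ffun V -> bool}) : R :=
  \sum_(a : state adj | a.2 == sg) law_at s a.

(* P(sigma_s = sg, sigma_{s+t} = sg') (Markov property) *)
Definition prob_spin2 (s t : R) (sg sg' : {ffun V -> bool}) : R :=
  \sum_(a : state adj | a.2 == sg) \sum_(b : state adj | b.2 == sg')
     law_at s a * trans t a b.

Definition cond_prob (s t : R) (sg sg' : {ffun V -> bool}) : R :=
  prob_spin2 s t sg sg' / prob_spin s sg.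

End Model.

(* IP is reversible for the dynamics: a spin at x can only flip when every
   edge at x is closed, and then the flip does not change the IP weight, while
   each edge update satisfies detailed balance on its own.  So IP is stationary
   and sigma_s has the law of sigma under IP.  Since P_t = I + tQ + O(t^2), the
   limit is the IP-average, given sigma, of the rate of flipping x, namely the
   IP-probability, given sigma, that all edges at x are closed.  Given sigma,
   IP makes the edges independent, and an edge at x is closed with probability
   1 - p if its endpoints agree and surely otherwise. *)

From Pilot Require Import Defs.
From HB Require Import structures.
From mathcomp Require Import all_boot all_order all_algebra.
From mathcomp Require Import all_classical all_reals all_analysis.
From mathcomp Require Import ring lra.
Set Implicit Arguments. Unset Strict Implicit. Unset Printing Implicit Defensive.
Import Order.TTheory GRing.Theory Num.Theory numFieldNormedType.Exports.
Local Open Scope ring_scope.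
Local Open Scope classical_set_scope.

Lemma linear_bound_cvg_at_right0 (R : realFieldType) (f : R -> R) (L C d : R) :
  0 < d -> (forall t, 0 < t -> t <= d -> `|f t - L| <= C * t) ->
  f t @[t --> 0^'+] --> L.
Proof.
move=> d0 fL; apply/cvgrPdist_le => e e0.
have C1 : 0 < `|C| + 1 by rewrite ltr_pwDr.
near=> t.
have t0 : 0 < t by near: t; exact: nbhs_right_gt.
have td : t <= d by near: t; exact: nbhs_right_le.
have te : t * (`|C| + 1) <= e.
  by rewrite -ler_pdivlMr //; near: t; apply: nbhs_right_le; rewrite divr_gt0.
rewrite distrC; apply: le_trans (fL t t0 td) _.
have := ler_norm C; nra.
Unshelve. all: by end_near.
Qed.

Section Flips.
Variables (V : finType) (adj : rel V).

Lemma flip_spinK (sg : {ffun V -> bool}) (y : V) :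
  flip_spin (flip_spin sg y) y = sg.
Proof. by apply/ffunP => z; rewrite !ffunE; case: eqP => //; rewrite negbK. Qed.

Lemma flip_edgeK (et : {ffun edge adj -> bool}) (e : edge adj) :
  flip_edge (flip_edge et e) e = et.
Proof. by apply/ffunP => f; rewrite !ffunE; case: eqP => //; rewrite negbK. Qed.

Lemma flip_spin_inj (sg : {ffun V -> bool}) : injective (flip_spin sg).
Proof.
by move=> y z /ffunP /(_ y); rewrite !ffunE eqxx; case: eqP => // _; case: (sg y).
Qed.

Lemma flip_edge_inj (et : {ffun edge adj -> bool}) : injective (flip_edge et).
Proof.
by move=> e f /ffunP /(_ e); rewrite !ffunE eqxx; case: eqP => // _; case: (et e).
Qed.

Lemma flip_spin_neq (sg : {ffun V -> bool}) (y : V) : flip_spin sg y != sg.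
Proof. by apply/eqP => /ffunP /(_ y); rewrite ffunE eqxx; case: (sg y). Qed.

Lemma delta_flip_spin (sg : {ffun V -> bool}) (y : V) (e : edge adj) :
  y \notin val e -> delta (flip_spin sg y) e = delta sg e.
Proof.
move=> ye; apply: eq_forallb_in => u ue; apply: eq_forallb_in => v ve.
by rewrite !ffunE !ifN //; apply: contraNneq ye => <-.
Qed.

End Flips.

Section Reversibility.
Variables (R : realType) (V : finType) (adj : rel V) (p : R).
Local Notation S := (state adj).
Local Notation rate := (rate p).
Local Notation gen := (gen p).
Local Notation IPw := (IPweight p).
Local Notation IP := (IP p).

Definition bond_weight (b d : bool) : R :=
  p * b%:R * d%:R + (1 - p) * (~~ b)%:R.

Lemma IPweightE (a : S) : IPw a = \prod_e bond_weight (a.1 e) (delta a.2 e).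
Proof. by []. Qed.

Definition closed_at (x : V) (a : S) := [forall e in Ex adj x, ~~ a.1 e].

Definition spin_move (a b : S) :=
  [exists y, [&& a.1 == b.1, b.2 == flip_spin a.2 y & closed_at y a]].

Definition edge_move (a b : S) (e : edge adj) :=
  (a.2 == b.2) && (b.1 == flip_edge a.1 e).

Lemma rateE (a b : S) : rate a b =
  if spin_move a b then 1
  else if [pick e | edge_move a b e] is Some e
       then bond_weight (~~ a.1 e) (delta a.2 e) else 0.
Proof.
rewrite /Defs.rate /spin_move /bond_weight; case: ifP => //.
by case: pickP => // e _; rewrite negbK.
Qed.

Lemma spin_moveC (a b : S) : spin_move a b = spin_move b a.
Proof.
suff imp c d : spin_move c d -> spin_move d c by apply/idP/idP => /imp.
case/existsP => y /and3P [/eqP c1 /eqP d2 /forall_inP cl].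
apply/existsP; exists y; rewrite c1 d2 flip_spinK !eqxx /=.
by apply/forall_inP => e /cl; rewrite c1.
Qed.

Lemma edge_moveC (a b : S) e : edge_move a b e = edge_move b a e.
Proof.
rewrite /edge_move eq_sym; congr (_ && _).
by apply/eqP/eqP => ->; rewrite flip_edgeK.
Qed.

Lemma edge_move_uniq (a b : S) e f : edge_move a b e -> edge_move a b f -> e = f.
Proof.
by rewrite /edge_move => /andP [_ /eqP ->] /andP [_ /eqP /flip_edge_inj].
Qed.

Lemma IPweight_spin_move (a b : S) : spin_move a b -> IPw a = IPw b.
Proof.
case/existsP => y /and3P [/eqP a1 /eqP b2 /forall_inP cl].
rewrite !IPweightE -a1 b2; apply: eq_bigr => e _.
case ae: (a.1 e); last by rewrite /bond_weight /= !mulr0 !mul0r.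
rewrite delta_flip_spin //; apply/negP => ye.
by have := cl e; rewrite inE ye ae => /(_ isT).
Qed.

Lemma IPweight_edge_move (a b : S) e : edge_move a b e ->
  IPw a * bond_weight (b.1 e) (delta a.2 e) =
  IPw b * bond_weight (a.1 e) (delta a.2 e).
Proof.
case/andP => /eqP a2 /eqP b1.
rewrite !IPweightE (bigD1 e) //= [in RHS](bigD1 e) //= -a2 b1 ffunE eqxx.
rewrite mulrC mulrA [in RHS]mulrAC; congr (_ * _); apply: eq_bigr => f fe.
by rewrite ffunE (negbTE fe).
Qed.

Lemma detailed_balance (a b : S) : IPw a * rate a b = IPw b * rate b a.
Proof.
rewrite !rateE (spin_moveC b a); case: ifP => [/IPweight_spin_move -> // | _].
case: pickP => [e ab_e | no_ab]; last first.
  case: pickP => [f ba_f | _]; last by rewrite !mulr0.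
  by have := no_ab f; rewrite edge_moveC ba_f.
have ba_e : edge_move b a e by rewrite -edge_moveC.
case: pickP => [f ba_f | ]; last by move/(_ e); rewrite ba_e.
rewrite (edge_move_uniq ba_f ba_e).
have /andP [/eqP a2 /eqP b1] := ab_e.
have b1e : b.1 e = ~~ a.1 e by rewrite b1 ffunE eqxx.
by rewrite -a2 -b1e (IPweight_edge_move ab_e) b1e negbK.
Qed.

Lemma IPweight_gen (b : S) : \sum_a IPw a * gen a b = 0.
Proof.
rewrite (bigD1 b) //= (eq_bigr (fun a => IPw b * rate b a)); last first.
  by move=> a ab; rewrite /Defs.gen (negbTE ab) detailed_balance.
by rewrite /Defs.gen eqxx -mulr_sumr mulrN addNr.
Qed.

Lemma sum_IP_gen (b : S) : \sum_a IP a * gen a b = 0.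
Proof.
rewrite /Defs.IP; under eq_bigr do rewrite mulrAC.
by rewrite -mulr_suml IPweight_gen mul0r.
Qed.

Lemma rate_to_flip_spin (x : V) (a b : S) : b.2 = flip_spin a.2 x ->
  rate a b = ((a.1 == b.1) && closed_at x a)%:R.
Proof.
move=> b2; rewrite rateE.
have -> : [pick e | edge_move a b e] = None.
  case: pickP => // e /andP [/eqP a2 _].
  by move: (flip_spin_neq a.2 x); rewrite -b2 -a2 eqxx.
case: ifP => [/existsP [y /and3P [-> /eqP] ] | /negbT /existsPn /(_ x)].
  by rewrite b2 => /flip_spin_inj -> ->.
by rewrite b2 eqxx /= => /negbTE ->.
Qed.

Lemma sum_gen_flip_spin (x : V) (a : S) :
  \sum_(b | b.2 == flip_spin a.2 x) gen a b = (closed_at x a)%:R.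
Proof.
pose a' : S := (a.1, flip_spin a.2 x).
have neq_a b : b.2 = flip_spin a.2 x -> (a == b) = false.
  by move=> b2; apply: contraNF (flip_spin_neq a.2 x) => /eqP ab; rewrite -b2 -ab.
rewrite (bigD1 a') ?eqxx //= big1 ?addr0.
  by rewrite /Defs.gen neq_a // (@rate_to_flip_spin x) // eqxx.
move=> b /andP [/eqP b2 ba']; rewrite /Defs.gen neq_a // (@rate_to_flip_spin x) //.
case: eqP => //= a1; case/eqP: ba'.
by case: b b2 a1 => b1 b2 /= -> <-.
Qed.

Lemma sum_spin_fiber (h : S -> R) (sg : {ffun V -> bool}) :
  \sum_(a | a.2 == sg) h a = \sum_et h (et, sg).
Proof.
transitivity (\sum_et \sum_(s | s == sg) h (et, s)).
  by rewrite pair_big; apply: eq_big => -[].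
by apply: eq_bigr => et _; rewrite big_pred1_eq.
Qed.

Lemma closed_atE (x : V) (a : S) :
  (closed_at x a)%:R = \prod_e (if e \in Ex adj x then (~~ a.1 e)%:R else 1) :> R.
Proof.
have [/forall_inP cl | /forall_inPn [e ex /negbNE ae]] := boolP (closed_at x a).
  by rewrite big1 // => e; case: ifP => // /cl /negbTE ->.
by rewrite (bigD1 e) //= ex ae mul0r.
Qed.

Lemma sum_bond_weight_closed (c d : bool) :
  \sum_b bond_weight b d * (if c then (~~ b)%:R else 1) =
  (if c && d then 1 - p else 1) * \sum_b bond_weight b d.
Proof. by case: c d => -[]; rewrite !big_bool /bond_weight /=; ring. Qed.

Lemma sum_IPweight_closed (x : V) (sg : {ffun V -> bool}) :
  \sum_(a : S | a.2 == sg) IPw a * (closed_at x a)%:R =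
  (1 - p) ^+ #|[set e in Ex adj x | delta sg e]| * \sum_(a : S | a.2 == sg) IPw a.
Proof.
rewrite !sum_spin_fiber.
(* Given the spins, IP is a product measure over the edges. *)
under eq_bigr do rewrite IPweightE closed_atE -big_split /=.
rewrite -(bigA_distr_bigA (fun e b =>
  bond_weight b (delta sg e) * (if e \in Ex adj x then (~~ b)%:R else 1))).
rewrite (eq_bigr (fun et : {ffun edge adj -> bool} =>
  \prod_e bond_weight (et e) (delta sg e))) //.
rewrite -(bigA_distr_bigA (fun e b => bond_weight b (delta sg e))).
under eq_bigr do rewrite sum_bond_weight_closed.
rewrite big_split /= -big_mkcond prodr_const; congr (_ ^+ _ * _).
by apply: eq_card => e; rewrite inE.
Qed.

Lemma sum_IP_gen_flip (x : V) (sg : {ffun V -> bool}) :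
  \sum_(a : S | a.2 == sg) IP a * \sum_(b : S | b.2 == flip_spin sg x) gen a b =
  (1 - p) ^+ #|[set e in Ex adj x | delta sg e]| * \sum_(a : S | a.2 == sg) IP a.
Proof.
rewrite (eq_bigr (fun a => IP a * (closed_at x a)%:R)); last first.
  by move=> a /eqP <-; rewrite sum_gen_flip_spin.
rewrite /Defs.IP; under eq_bigr do rewrite mulrAC.
by rewrite -mulr_suml sum_IPweight_closed -mulrA mulr_suml.
Qed.

End Reversibility.

Section Semigroup.
Variables (R : realType) (V : finType) (adj : rel V) (p : R).
Local Notation S := (state adj).
Local Notation gen := (gen p).
Local Notation genpow := (genpow p).
Local Notation trans := (trans p).
Local Notation IP := (IP p).

Definition gen_mass : R := \sum_(a : S) \sum_(c : S) `|gen a c|.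

Lemma gen_mass_ge0 : 0 <= gen_mass.
Proof. by do 2![apply: sumr_ge0 => ? _]. Qed.

Lemma sum_norm_gen_le (a : S) : \sum_c `|gen a c| <= gen_mass.
Proof.
by rewrite /gen_mass [leRHS](bigD1 a) //= lerDl; do 2![apply: sumr_ge0 => ? _].
Qed.

Lemma norm_genpow_le n (a b : S) : `|genpow n a b| <= gen_mass ^+ n.
Proof.
elim: n a => [|n IHn] a /=; first by case: eqP; rewrite ?normr1 ?normr0.
apply: le_trans (ler_norm_sum _ _ _) _.
apply: le_trans (_ : \sum_c `|gen a c| * gen_mass ^+ n <= _).
  by apply: ler_sum => c _; rewrite normrM ler_wpM2l.
rewrite -mulr_suml exprS ler_wpM2r ?exprn_ge0 ?gen_mass_ge0 //.
exact: sum_norm_gen_le.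
Qed.

Definition exp_term (t : R) (a b : S) (n : nat) : R :=
  t ^+ n / (n`!)%:R * genpow n a b.

Lemma exp_term0 t (a b : S) : exp_term t a b 0 = (a == b)%:R.
Proof. by rewrite /exp_term expr0 fact0 divr1 mul1r. Qed.

Lemma transE t (a b : S) : trans t a b = limn (series (exp_term t a b)).
Proof.
rewrite /Defs.trans (_ : (fun N : nat => _) = series (exp_term t a b)) //.
by apply/funext => N; rewrite /series /= big_mkord.
Qed.

Lemma is_cvg_trans_series t (a b : S) : cvgn (series (exp_term t a b)).
Proof.
apply: normed_cvg.
apply: series_le_cvg (is_cvg_series_exp_coeff (`|t| * gen_mass)) => n /=.
- exact: normr_ge0.
- by rewrite /exp_coeff mulr_ge0 ?exprn_ge0 ?mulr_ge0 ?gen_mass_ge0 ?invr_ge0.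
rewrite /exp_coeff /exp_term /= !normrM normrX normfV normr_nat exprMn mulrAC.
by rewrite ler_wpM2r ?invr_ge0 // ler_wpM2l ?exprn_ge0 ?norm_genpow_le.
Qed.

Lemma norm_exp_term_le t (a b : S) n : 0 <= t ->
  `|exp_term t a b n| <= (t * (gen_mass + 1)) ^+ n.
Proof.
move=> t0; rewrite /exp_term !normrM normrX normfV normr_nat ger0_norm //.
rewrite exprMn -mulrA.
rewrite ler_wpM2l ?exprn_ge0 //; apply: le_trans (_ : 1 * gen_mass ^+ n <= _).
  by rewrite ler_pM ?invr_ge0 ?norm_genpow_le // invf_le1 ?ler1n ?ltr0n ?fact_gt0.
by rewrite mul1r lerXn2r ?nnegrE ?addr_ge0 ?gen_mass_ge0 ?lerDl.
Qed.

Lemma exp_term1 t (a b : S) : exp_term t a b 1 = t * gen a b.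
Proof.
rewrite /exp_term expr1 /= divr1 (bigD1 b) //= eqxx mulr1 big1 ?addr0 //.
by move=> c /negbTE cb; rewrite cb mulr0.
Qed.

Lemma sum_expr_from2_le (y : R) N : 0 <= y -> 2 * y <= 1 ->
  \sum_(2 <= k < N) y ^+ k <= 2 * y ^+ 2.
Proof.
move=> y0 y1.
have tail n : \sum_(2 <= k < n.+2) y ^+ k + 2 * y ^+ n.+2 <= 2 * y ^+ 2.
  elim: n => [|n IHn]; first by rewrite big_geq // add0r.
  rewrite big_nat_recr //= [y ^+ n.+3]exprS.
  have := exprn_ge0 n.+2 y0; move: IHn.
  set z := y ^+ n.+2; set A := \sum_(_ <= _ < _) _; nra.
have [N2|/subnKC <-] := leqP N 2; first by rewrite big_geq // mulr_ge0 ?exprn_ge0.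
apply: le_trans (tail (N - 3).+1); rewrite lerDl mulr_ge0 ?exprn_ge0 //.
Qed.

Lemma sum_IP_genpowS n (b : S) : \sum_a IP a * genpow n.+1 a b = 0.
Proof.
under eq_bigr do rewrite /= mulr_sumr.
rewrite exchange_big big1 //= => c _.
by under eq_bigr do rewrite mulrA; rewrite -mulr_suml sum_IP_gen mul0r.
Qed.

Lemma sum_IP_trans_series t (b : S) N :
  \sum_a IP a * series (exp_term t a b) N.+1 = IP b.
Proof.
transitivity (\sum_(0 <= k < N.+1) \sum_a IP a * exp_term t a b k).
  by rewrite exchange_big; apply: eq_bigr => a _; rewrite mulr_sumr.
rewrite big_nat_recl // [X in _ + X]big1 ?addr0 => [|k _]; last first.
  under eq_bigr do rewrite /exp_term mulrCA.
  by rewrite -mulr_sumr sum_IP_genpowS mulr0.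
rewrite (bigD1 b) //= exp_term0 eqxx mulr1 big1 ?addr0 // => a /negbTE ab.
by rewrite exp_term0 ab mulr0.
Qed.

Lemma law_atE s (b : S) : law_at p s b = IP b.
Proof.
have cvg_law :
    \sum_a IP a * series (exp_term s a b) N @[N --> \oo] --> law_at p s b.
  rewrite /Defs.law_at; apply: (cvg_big add_continuous) => // a _; rewrite transE.
  by apply: cvgMl_tmp; exact: is_cvg_trans_series.
apply: (cvg_unique (@Rhausdorff R) cvg_law); apply: cvg_near_cst; near=> N.
have N1 : (1 <= N)%N by near: N; exact: nbhs_infty_ge.
by rewrite -(prednK N1) sum_IP_trans_series.
Unshelve. all: by end_near.
Qed.

Lemma trans_sub_gen_le t (a b : S) : a != b -> 0 < t ->
  2 * (t * (gen_mass + 1)) <= 1 ->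
  `|trans t a b - t * gen a b| <= 2 * (t * (gen_mass + 1)) ^+ 2.
Proof.
move=> ab t0 ty; set y := t * (gen_mass + 1) in ty *.
have y0 : 0 <= y by apply: mulr_ge0; [exact: ltW | rewrite addr_ge0 ?gen_mass_ge0].
have partial_le N : `|series (exp_term t a b) N.+2 - t * gen a b| <= 2 * y ^+ 2.
  rewrite /series /= big_ltn // big_ltn // exp_term0 exp_term1 (negbTE ab).
  rewrite add0r addrAC subrr add0r.
  apply: le_trans (ler_norm_sum _ _ _) (le_trans _ (sum_expr_from2_le N.+2 y0 ty)).
  by apply: ler_sum => k _; apply: norm_exp_term_le; rewrite ltW.
have cvg_dist : `|series (exp_term t a b) N - t * gen a b| @[N --> \oo] -->
                `|trans t a b - t * gen a b|.
  rewrite transE; apply: cvg_norm; apply: (cvgB _ (cvg_cst _)).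
  exact: is_cvg_trans_series.
apply: (cvgr_to_le cvg_dist); near=> N.
have N2 : (2 <= N)%N by near: N; exact: nbhs_infty_ge.
by rewrite -(subnK N2) addn2.
Unshelve. all: by end_near.
Qed.

Lemma trans_div_cvg (a b : S) :
  a != b -> trans t a b / t @[t --> 0^'+] --> gen a b.
Proof.
move=> ab; set K := gen_mass + 1.
have K0 : 0 < K by rewrite ltr_wpDl ?gen_mass_ge0.
apply: (@linear_bound_cvg_at_right0 _ _ _ (2 * K ^+ 2) (1 / (2 * K))).
  by rewrite divr_gt0 ?mulr_gt0.
move=> t t0 td.
have ty : 2 * (t * K) <= 1 by move: td; rewrite ler_pdivlMr ?mulr_gt0 // mulrCA.
have -> : trans t a b / t - gen a b = (trans t a b - t * gen a b) / t.
  by field; rewrite gt_eqF.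
rewrite normrM normfV (gtr0_norm t0) ler_pdivrMr //.
have -> : 2 * K ^+ 2 * t * t = 2 * (t * K) ^+ 2 by ring.
exact: trans_sub_gen_le.
Qed.

End Semigroup.

Theorem proposition2 (R : realType) (V : finType) (adj : rel V)
  (adj_sym : symmetric adj) (adj_irr : irreflexive adj)
  (p : R) (hp0 : 0 <= p) (hp1 : p <= 1)
  (x : V) (sg : {ffun V -> bool}) (s : R) (hs : 0 <= s)
  (hpos : 0 < @prob_spin R V adj p s sg) :
  (fun t : R => @cond_prob R V adj p s t sg (flip_spin sg x) / t) @ at_right 0
    --> (1 - p) ^+ #|[set e in @Ex V adj x | @delta V adj sg e]|.
Proof.
(* The identity is algebraic in p. *)
set P := prob_spin adj p s sg.
have P_IP : P = \sum_(a : state adj | a.2 == sg) IP p a.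
  by apply: eq_bigr => a _; rewrite law_atE.
have -> : (fun t => cond_prob adj p s t sg (flip_spin sg x) / t) =
    (fun t => (\sum_(a : state adj | a.2 == sg)
                 IP p a * \sum_(b : state adj | b.2 == flip_spin sg x)
                            trans p t a b / t) / P).
  apply/funext => t; rewrite /cond_prob /prob_spin2 -/P mulrAC; congr (_ / P).
  rewrite mulr_suml; apply: eq_bigr => a _; rewrite law_atE mulr_sumr mulr_suml.
  by apply: eq_bigr => b _; rewrite mulrA.
rewrite -[X in _ --> X](mulfK (lt0r_neq0 hpos : P != 0)) P_IP -sum_IP_gen_flip -P_IP.
apply: cvgMr_tmp; apply: (cvg_big add_continuous) => // a /eqP a2.
apply: cvgMl_tmp; apply: (cvg_big add_continuous) => // b /eqP b2.
apply: trans_div_cvg.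
by apply: contra_neq (flip_spin_neq a.2 x) => ab; rewrite a2 -b2 -ab a2.
Qed.
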